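(* Suppose there is a $(v,[k_1,k_2,k_3],\lambda)$ Hadamard partitioned difference family. Then $k_1$ and $k_2$ are (in some order) the two numbers $$\frac{2\lambda-k_3\pm\sqrt{2\lambda(2k_3+1)-3k_3^2}}{2}.$$
   Context: $G$ is a finite group of order $v$ written additively, with difference $x-y:=x+(-y)$. For $B\subseteq G$, $\Delta B$ is the multiset $\{x-y: x,y\in B, x\neq y\}$; for $\mathcal{F}=\{B_1,\dots,B_t\}$, $\Delta\mathcal{F}$ is the multiset union of the $\Delta B_i$. A $(v,[k_1,\dots,k_t],\lambda)$ partitioned difference family (PDF) is a collection $\{B_1,\dots,B_t\}$ of subsets partitioning some group $G$ of order $v$ with $|B_i|=k_i$ such that $\Delta\mathcal{F}$ contains every non-zero element of $G$ exactly $\lambda$ times. It is Hadamard (HPDF) if $v=2\lambda$. *)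

From mathcomp Require Import all_boot all_order all_algebra all_fingroup.
Set Implicit Arguments. Unset Strict Implicit. Unset Printing Implicit Defensive.

(* The group G (possibly non-abelian) is a subgroup of a finGroupType gT;
   the paper's additive notation x - y := x + (-y) becomes x * y^-1. *)

(* multiplicity of g in the multiset Delta B = { x - y : x, y in B, x <> y } *)
Definition diff_count (gT : finGroupType) (B : {set gT}) (g : gT) : nat :=
  #|[set p in setX B B | (p.1 != p.2) && ((p.1 * p.2^-1)%g == g)]|.

Definition is_PDF (gT : finGroupType) (G : {group gT}) (t : nat)
    (B : 'I_t -> {set gT}) (lam : nat) : Prop :=
  [/\ (forall i j, i != j -> [disjoint B i & B j]),
      \bigcup_(i < t) B i = G
    & forall g, g \in G -> g != 1%g -> \sum_(i < t) diff_count (B i) g = lam].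

Definition is_HPDF (gT : finGroupType) (G : {group gT}) (t : nat)
    (B : 'I_t -> {set gT}) (lam : nat) : Prop :=
  is_PDF G B lam /\ #|G| = (2 * lam)%N.

From mathcomp Require Import all_boot all_order all_algebra all_fingroup.
From mathcomp Require Import lra.
Set Implicit Arguments. Unset Strict Implicit. Unset Printing Implicit Defensive.

(* The blocks partition G, so sum_i k_i = v, and sorting the ordered pairs
   of distinct elements of each block by their difference gives
   sum_i k_i (k_i - 1) = lam (v - 1).  With three blocks and v = 2 lam these
   say k1 + k2 = 2 lam - k3 and (k1 - k2)^2 = 2 lam (2 k3 + 1) - 3 k3^2, so
   k1 and k2 are the two roots of the quadratic with that sum and that
   discriminant. *)

Definition offdiag (T : finType) (A : {set T}) : {set T * T} :=
  [set p in setX A A | p.1 != p.2].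

Lemma card_offdiag (T : finType) (A : {set T}) :
  #|offdiag A| + #|A| = #|A| ^ 2.
Proof.
rewrite -mulnn -cardsX -(cardsID [set p | p.1 == p.2] (setX A A)) addnC.
congr (_ + _); last by apply: eq_card => p; rewrite !inE andbC.
have -> : setX A A :&: [set p | p.1 == p.2] = [set (x, x) | x in A].
  apply/setP => -[x y]; rewrite !inE /=.
  apply/idP/imsetP => [/andP[/andP[xA _] /eqP <-] | [z zA [-> ->]]].
    by exists x.
  by rewrite zA eqxx.
by rewrite card_imset // => x y /(congr1 fst).
Qed.

Lemma sum_diff_count (gT : finGroupType) (G : {group gT}) (B : {set gT}) :
  B \subset G -> \sum_(g in G :\ 1%g) diff_count B g = #|offdiag B|.
Proof.
move=> sBG; rewrite -sum1_card.
rewrite (partition_big (fun p : gT * gT => (p.1 * p.2^-1)%g) (mem (G :\ 1%g)));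
  last first.
  move=> [x y]; rewrite !inE /= => /andP[/andP[xB yB] neq_xy].
  by rewrite -eq_mulgV1 neq_xy groupM ?groupV ?(subsetP sBG).
apply: eq_bigr => g _; rewrite /diff_count -sum1_card.
by apply: eq_bigl => p; rewrite !inE andbA.
Qed.

Lemma card_bigcup_disjoint (I T : finType) (B : I -> {set T}) :
  (forall i j, i != j -> [disjoint B i & B j]) ->
  #|\bigcup_i B i| = \sum_i #|B i|.
Proof.
move=> disjB; rewrite -sum1_card.
under [RHS]eq_bigr do rewrite -sum1_card.
rewrite (exchange_big_dep (mem (\bigcup_i B i))) /=; last first.
  by move=> i x _ xBi; apply/bigcupP; exists i.
apply: eq_bigr => x /bigcupP[i _ xBi]; rewrite sum1_card.
rewrite -(card1 i); apply: eq_card => j; rewrite !inE /=.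
apply/eqP/idP => [-> // | xBj]; apply: contraTeq xBi => neq_ji.
by rewrite (disjointFr (disjB j i neq_ji) xBj).
Qed.

Lemma big_ord3 (T : Type) (idx : T) (op : Monoid.law idx) (F : 'I_3 -> T) :
  \big[op/idx]_(i < 3) F i = op (F ord0) (op (F (inord 1)) (F (inord 2))).
Proof.
rewrite !big_ord_recl big_ord0 Monoid.mulm1.
by congr (op _ (op (F _) (F _))); apply: val_inj; rewrite /= inordK.
Qed.

Section PartitionedDifferenceFamily.

Variables (gT : finGroupType) (G : {group gT}) (t : nat).
Variables (B : 'I_t -> {set gT}) (lam : nat).
Hypothesis pdfB : is_PDF G B lam.

Lemma pdf_sub i : B i \subset G.
Proof. by case: pdfB => _ <- _; apply: (bigcup_sup i). Qed.

Lemma pdf_sum_card : \sum_i #|B i| = #|G|.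
Proof. by case: pdfB => disjB <- _; rewrite card_bigcup_disjoint. Qed.

(* sum_i k_i (k_i - 1) = lam (v - 1), rearranged to avoid truncated
   subtraction. *)
Lemma pdf_sum_card_sqr : \sum_i #|B i| ^ 2 + lam = (lam + 1) * #|G|.
Proof.
have [_ _ countB] := pdfB.
have sum_offdiag : \sum_i #|offdiag (B i)| = lam * #|G :\ 1%g|.
  under eq_bigr do rewrite -(sum_diff_count (pdf_sub _)).
  rewrite exchange_big /= mulnC -sum_nat_const.
  by apply: eq_bigr => g /setD1P[g1 gG]; rewrite countB.
under eq_bigr do rewrite -card_offdiag.
rewrite big_split /= sum_offdiag pdf_sum_card (cardsD1 1%g G) group1.
by rewrite mulnDl mulnDr mul1n muln1 [LHS]addnC addnA.
Qed.

End PartitionedDifferenceFamily.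

Import Order.TTheory GRing.Theory Num.Theory.
Local Open Scope ring_scope.

Lemma roots_of_sum_and_sqr_diff (R : rcfType) (a b s D : R) :
  a + b = s -> (a - b) ^+ 2 = D ->
  (a = (s + Num.sqrt D) / 2 /\ b = (s - Num.sqrt D) / 2) \/
  (a = (s - Num.sqrt D) / 2 /\ b = (s + Num.sqrt D) / 2).
Proof.
move=> <- <-; rewrite sqrtr_sqr.
have [le0ab | lt_ab0] := lerP 0 (a - b).
  by rewrite ger0_norm //; left; split; lra.
by rewrite ltr0_norm //; right; split; lra.
Qed.

Theorem proposition3p2 (R : rcfType) (gT : finGroupType) (G : {group gT})
    (B : 'I_3 -> {set gT}) (v k1 k2 k3 lam : nat) :
  is_HPDF G B lam -> #|G| = v ->
  #|B ord0| = k1 -> #|B (inord 1)| = k2 -> #|B (inord 2)| = k3 ->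
  let D : R := 2 * lam%:R * (2 * k3%:R + 1) - 3 * k3%:R ^+ 2 in
  let kp : R := (2 * lam%:R - k3%:R + Num.sqrt D) / 2 in
  let km : R := (2 * lam%:R - k3%:R - Num.sqrt D) / 2 in
  (k1%:R = kp /\ k2%:R = km) \/ (k1%:R = km /\ k2%:R = kp).
Proof.
move=> [pdfB cardG] _ cardB1 cardB2 cardB3 D kp km.
have := pdf_sum_card pdfB; have := pdf_sum_card_sqr pdfB.
rewrite !big_ord3 cardB1 cardB2 cardB3 cardG.
move=> /(congr1 (fun n => n%:R : R)) sum_sqr.
move=> /(congr1 (fun n => n%:R : R)) sum_card.
rewrite !(natrD, natrM, natrX) in sum_sqr sum_card.
apply: roots_of_sum_and_sqr_diff; first by lra.
by rewrite /D; nra.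
Qed.
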